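(* Let $a>0$, $1<b\le 2$, $R_0>R_\infty>0$ and $\tau>0$, with $(a,b)\neq(1,2)$. Define, for $\Re\{s\}>0$, $Z_U(s):=R_\infty+(R_0-R_\infty)\,\frac{U(a,b,s\tau)}{1+U(a,b,s\tau)}$. Then $Z_U$ is not a single-time-constant Debye element: there is no $\tau'>0$ such that $Z_U(s)=R_\infty+\frac{R_0-R_\infty}{1+s\tau'}$ for all $s$ with $\Re\{s\}>0$. In particular, its time-domain relaxation is not a single exponential.
   Context: $U(a,b,z)$ denotes the Tricomi confluent hypergeometric function, given for $a>0$, $b>1$, $\Re\{z\}>0$ by $U(a,b,z)=\frac{1}{\Gamma(a)}\int_0^\infty e^{-zt}t^{a-1}(1+t)^{b-a-1}\,\mathrm{d}t$. *)

From Stdlib Require Import Reals.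
From Coquelicot Require Import Coquelicot.
Open Scope R_scope.

Definition Gamma_fun (a : R) : R :=
  RInt_gen (fun t => exp (- t) * Rpower t (a - 1))
           (at_right 0) (Rbar_locally p_infty).

(* complex exponential e^{-z t} for real t, written out:
   e^{-(x+iy)t} = e^{-xt} (cos(yt) - i sin(yt)) *)
Definition cexp_neg (z : C) (t : R) : C :=
  (exp (- (Re z) * t) * cos (Im z * t), - (exp (- (Re z) * t) * sin (Im z * t))).

(* Tricomi confluent hypergeometric function, integral representation
   (a > 0, b > 1, Re z > 0):
   U(a,b,z) = 1/Gamma(a) int_0^oo e^{-zt} t^{a-1} (1+t)^{b-a-1} dt. *)
Definition TricomiU (a b : R) (z : C) : C :=
  Cmult (RtoC (/ Gamma_fun a))
    (@RInt_gen C_R_CompleteNormedModule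
       (fun t : R => Cmult (cexp_neg z t)
                      (RtoC (Rpower t (a - 1) * Rpower (1 + t) (b - a - 1))))
       (at_right 0) (Rbar_locally p_infty)).

Definition Z_U (a b R0 Rinf tau : R) (s : C) : C :=
  let u := TricomiU a b (Cmult s (RtoC tau)) in
  Cplus (RtoC Rinf) (Cmult (RtoC (R0 - Rinf)) (Cdiv u (Cplus (RtoC 1) u))).

Definition Debye (R0 Rinf tau' : R) (s : C) : C :=
  Cplus (RtoC Rinf)
        (Cdiv (RtoC (R0 - Rinf)) (Cplus (RtoC 1) (Cmult s (RtoC tau')))).

From Stdlib Require Import Reals.
From Coquelicot Require Import Coquelicot.
Open Scope R_scope.

From Stdlib Require Import Lra Classical.

(* On the positive real axis the Debye identity reads U(a,b,z) = tau/(tau' z), i.e. the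
   Laplace transform J(z) = int_0^oo e^{-zt} h(t) dt of h(t) = t^{a-1} (1+t)^{b-a-1}
   satisfies z J(z) = const > 0.  For a > 1 this is impossible because h <= min(t^{a-1}, 1)
   forces z J(z) -> 0 as z -> oo.  For a <= 1 and (a,b) <> (1,2) the kernel h is strictly
   decreasing, so (2e^{-2t} - e^{-t}) (h(t) - h(ln 2)) is nonnegative and not identically
   zero, whereas its integral is 2 J(2) - J(1) = 0. *)

Notation is_RInt_0oo f l := (is_RInt_gen f (at_right 0) (Rbar_locally p_infty) l).

Lemma continuous_of_ex_derive (f : R -> R) x : ex_derive f x -> continuous f x.
Proof. apply (ex_derive_continuous (K := R_AbsRing) (V := R_NormedModule)). Qed.

Lemma ex_RInt_of_continuous_pos (f : R -> R) :
  (forall t, 0 < t -> continuous f t) -> forall x y, 0 < x -> x <= y -> ex_RInt f x y.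
Proof.
intros Hf x y Hx Hxy; apply (ex_RInt_continuous (V := R_CompleteNormedModule)).
intros t Ht; rewrite Rmin_left in Ht by lra; apply Hf; lra.
Qed.

Lemma at_right_0_lt c : 0 < c -> at_right 0 (fun x => 0 < x < c).
Proof.
intros Hc; exists (mkposreal c Hc); intros t Ht Ht0; simpl.
change (Rabs (t - 0) < c) in Ht; rewrite Rminus_0_r, Rabs_pos_eq in Ht; lra.
Qed.

Section NonnegativeImproperIntegral.

Variable f : R -> R.
Hypothesis f_ex_RInt : forall x y, 0 < x -> x <= y -> ex_RInt f x y.
Hypothesis f_ge0 : forall t, 0 < t -> 0 <= f t.

Lemma RInt_le_RInt_widen x' x y y' :
  0 < x' -> x' <= x -> x <= y -> y <= y' -> RInt f x y <= RInt f x' y'.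
Proof.
intros Hx' Hx'x Hxy Hyy'.
rewrite <- (RInt_Chasles f x' x y') by (apply f_ex_RInt; lra).
rewrite <- (RInt_Chasles f x y y') by (apply f_ex_RInt; lra).
assert (0 <= RInt f x' x)
  by (apply RInt_ge_0; [lra | apply f_ex_RInt; lra | intros; apply f_ge0; lra]).
assert (0 <= RInt f y y')
  by (apply RInt_ge_0; [lra | apply f_ex_RInt; lra | intros; apply f_ge0; lra]).
unfold plus; simpl; lra.
Qed.

Lemma is_RInt_0oo_approx L eps x y :
  is_RInt_0oo f L -> 0 < eps -> 0 < x -> x <= y ->
  exists x' y', 0 < x' /\ x' <= x /\ y <= y' /\ Rabs (RInt f x' y' - L) < eps.
Proof.
intros HL Heps Hx Hxy.
destruct (HL (ball L (mkposreal _ Heps)) (locally_ball _ _)) as [P Q [d Hd] [M HM] HPQ].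
set (x' := Rmin x (d / 2)); set (y' := Rmax y (M + 1)).
assert (Hd0 : 0 < d) by apply cond_pos.
assert (Hx' : 0 < x') by (apply Rmin_pos; lra).
destruct (HPQ x' y') as [v [Hv Hball]].
- apply Hd; [| exact Hx'].
  change (Rabs (x' - 0) < d); rewrite Rminus_0_r, Rabs_pos_eq by lra.
  assert (x' <= d / 2) by apply Rmin_r; lra.
- apply HM; assert (M + 1 <= y') by apply Rmax_r; lra.
- exists x', y'; repeat split; [exact Hx' | apply Rmin_l | apply Rmax_l |].
  rewrite (is_RInt_unique f x' y' v Hv); exact Hball.
Qed.

Lemma RInt_le_is_RInt_0oo L x y :
  is_RInt_0oo f L -> 0 < x -> x <= y -> RInt f x y <= L.
Proof.
intros HL Hx Hxy.
destruct (Rle_lt_dec (RInt f x y) L) as [Hle | Hlt]; [exact Hle | exfalso].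
destruct (is_RInt_0oo_approx L (RInt f x y - L) x y HL) as (x' & y' & Hx' & Hx'x & Hyy' & Happrox);
  try lra.
pose proof (RInt_le_RInt_widen x' x y y' Hx' Hx'x Hxy Hyy').
apply Rabs_def2 in Happrox; lra.
Qed.

Lemma is_RInt_0oo_gt_0 L x y :
  is_RInt_0oo f L -> 0 < x < y ->
  (forall t, x <= t <= y -> continuous f t) -> (forall t, x < t < y -> 0 < f t) ->
  0 < L.
Proof.
intros HL Hxy Hcont Hpos.
apply Rlt_le_trans with (RInt f x y).
- apply RInt_gt_0; auto; lra.
- apply RInt_le_is_RInt_0oo; auto; lra.
Qed.

Lemma ex_is_RInt_0oo_of_bounded B :
  (forall x y, 0 < x -> x <= y -> RInt f x y <= B) -> exists L, is_RInt_0oo f L.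
Proof.
intros HB.
set (S := fun r => exists x y, 0 < x /\ x <= y /\ r = RInt f x y).
destruct (completeness S) as [L [HLub HLleast]].
- exists B; intros r (x & y & Hx & Hxy & ->); auto.
- exists (RInt f 1 1), 1, 1; repeat split; lra.
- exists L; intros P [eps Heps].
  assert (exists x0 y0, 0 < x0 /\ x0 <= y0 /\ L - eps < RInt f x0 y0)
    as (x0 & y0 & Hx0 & Hx0y0 & Hclose).
  { apply NNPP; intros Hnone.
    assert (L <= L - eps) by (apply HLleast; intros r (x & y & Hx & Hxy & ->);
      apply Rnot_lt_le; intros Hlt; apply Hnone; exists x, y; auto).
    pose proof (cond_pos eps); lra. }
  apply (Filter_prod _ _ _ (fun x => 0 < x < x0) (fun y => y0 < y)).
  + apply at_right_0_lt, Hx0.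
  + exists y0; auto.
  + intros x y Hx Hy; simpl in *; exists (RInt f x y); split.
    * apply (RInt_correct (V := R_CompleteNormedModule)), f_ex_RInt; lra.
    * apply Heps; change (Rabs (RInt f x y - L) < eps).
      assert (RInt f x y <= L) by (apply HLub; exists x, y; repeat split; lra).
      pose proof (RInt_le_RInt_widen x x0 y0 y ltac:(lra) ltac:(lra) ltac:(lra) ltac:(lra)).
      apply Rabs_def1; lra.
Qed.

End NonnegativeImproperIntegral.

Lemma is_RInt_0oo_le (f g : R -> R) lf lg :
  (forall t, 0 < t -> Rabs (f t) <= g t) -> is_RInt_0oo f lf -> is_RInt_0oo g lg -> lf <= lg.
Proof.
intros Hfg Hf Hg.
apply Rle_trans with (Rabs lf); [apply Rle_abs |].
apply (@RInt_gen_norm R_CompleteNormedModule (at_right 0) (Rbar_locally p_infty) _ _ f g lf lg);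
  [| | exact Hf | exact Hg];
  apply (Filter_prod _ _ _ (fun x => 0 < x < 1) (fun y => 1 < y));
  try (apply at_right_0_lt; lra); try (exists 1; auto).
- intros; simpl; lra.
- intros x y Hx Hy t Ht; apply Hfg; simpl in *; lra.
Qed.

Lemma is_RInt_0oo_exp z : 0 < z -> is_RInt_0oo (fun t => exp (- z * t)) (/ z).
Proof.
intros Hz.
set (F t := - exp (- z * t) / z).
assert (HF : forall t, is_derive F t (exp (- z * t)))
  by (intros t; unfold F; auto_derive; [exact I | field; lra]).
assert (HcontF : forall t, continuous F t)
  by (intros t; apply continuous_of_ex_derive; eexists; apply HF).
apply is_RInt_gen_ext with (Derive F).
{ apply filter_forall; intros ab t _; apply is_derive_unique, HF. }
replace (/ z) with (0 - F 0) by (unfold F; rewrite Rmult_0_r, exp_0; field; lra).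
apply is_RInt_gen_Derive.
- apply filter_forall; intros ab t _; eexists; apply HF.
- apply filter_forall; intros ab t _.
  apply continuous_ext with (fun t => exp (- z * t)).
  { intros u; symmetry; apply is_derive_unique, HF. }
  apply continuous_of_ex_derive; auto_derive; exact I.
- apply (filterlim_filter_le_1 (F := locally 0)); [| apply HcontF].
  intros P [e He]; exists e; intros t Ht _; apply He, Ht.
- assert (Hlin : is_lim (fun t => - z * t) p_infty m_infty).
  { replace m_infty with (Rbar_mult (- z) p_infty)
      by (simpl; destruct Rle_dec; [exfalso; lra | reflexivity]).
    apply is_lim_scal_l, is_lim_id. }
  assert (Hexp : is_lim (fun t => exp (- z * t)) p_infty 0).
  { apply is_lim_comp with m_infty; [apply is_lim_exp_m | exact Hlin |].
    exists 0; intros; discriminate. }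
  apply (is_lim_scal_l _ (- / z)) in Hexp.
  simpl in Hexp; rewrite Rmult_0_r in Hexp.
  apply (is_lim_ext _ F p_infty 0) in Hexp; [exact Hexp|].
  intros t; unfold F; field; lra.
Qed.

Lemma exp_le_exp x y : x <= y -> exp x <= exp y.
Proof. intros [Hlt | ->]; [left; apply exp_increasing, Hlt | right; reflexivity]. Qed.

Definition tricomi_kernel (a b t : R) : R := Rpower t (a - 1) * Rpower (1 + t) (b - a - 1).

Lemma tricomi_kernel_exp a b t :
  tricomi_kernel a b t = exp ((a - 1) * (ln t - ln (1 + t)) + (b - 2) * ln (1 + t)).
Proof. unfold tricomi_kernel, Rpower; rewrite <- exp_plus; f_equal; ring. Qed.

Lemma tricomi_kernel_pos a b t : 0 < tricomi_kernel a b t.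
Proof. rewrite tricomi_kernel_exp; apply exp_pos. Qed.

Lemma ln_lt_ln_1_plus t : 0 < t -> ln t < ln (1 + t).
Proof. intros Ht; apply ln_increasing; lra. Qed.

Lemma ln_1_plus_pos t : 0 < t -> 0 < ln (1 + t).
Proof. intros Ht; rewrite <- ln_1; apply ln_increasing; lra. Qed.

Lemma tricomi_kernel_le_Rpower a b t :
  b <= a + 1 -> 0 < t -> tricomi_kernel a b t <= Rpower t (a - 1).
Proof.
intros Hb Ht; unfold tricomi_kernel.
rewrite <- (Rmult_1_r (Rpower t (a - 1))) at 2.
apply Rmult_le_compat_l; [left; apply exp_pos |].
unfold Rpower; apply Rle_trans with (exp 0); [apply exp_le_exp | rewrite exp_0; lra].
pose proof (ln_1_plus_pos t Ht); nra.
Qed.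

Lemma tricomi_kernel_le_1 a b t : 1 <= a -> b <= 2 -> 0 < t -> tricomi_kernel a b t <= 1.
Proof.
intros Ha Hb Ht; rewrite tricomi_kernel_exp.
apply Rle_trans with (exp 0); [apply exp_le_exp | rewrite exp_0; lra].
pose proof (ln_lt_ln_1_plus t Ht); pose proof (ln_1_plus_pos t Ht); nra.
Qed.

Lemma tricomi_kernel_le_near_0 a b t :
  b <= a + 2 -> 0 < t <= 1 -> tricomi_kernel a b t <= 2 * Rpower t (a - 1).
Proof.
intros Hb Ht; unfold tricomi_kernel; rewrite Rmult_comm.
apply Rmult_le_compat_r; [left; apply exp_pos |].
unfold Rpower; apply Rle_trans with (exp (ln 2)); [apply exp_le_exp | rewrite exp_ln; lra].
assert (ln (1 + t) <= ln 2) by (apply ln_le; lra).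
pose proof (ln_1_plus_pos t (proj1 Ht)); nra.
Qed.

Lemma tricomi_kernel_le_at_oo a b t : 0 <= a -> b <= 2 -> 1 <= t -> tricomi_kernel a b t <= 2.
Proof.
intros Ha Hb Ht; rewrite tricomi_kernel_exp.
apply Rle_trans with (exp (ln 2)); [apply exp_le_exp | rewrite exp_ln; lra].
assert (ln (1 + t) <= ln 2 + ln t) by (rewrite <- ln_mult by lra; apply ln_le; lra).
pose proof (ln_lt_ln_1_plus t ltac:(lra)); pose proof (ln_1_plus_pos t ltac:(lra)); nra.
Qed.

Lemma tricomi_kernel_decreasing a b s t :
  a <= 1 -> b <= 2 -> ~ (a = 1 /\ b = 2) -> 0 < s < t ->
  tricomi_kernel a b t < tricomi_kernel a b s.
Proof.
intros Ha Hb Hab Hst; rewrite !tricomi_kernel_exp; apply exp_increasing.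
assert (Hratio : ln s - ln (1 + s) < ln t - ln (1 + t)).
{ assert (ln (s * (1 + t)) < ln (t * (1 + s))) by (apply ln_increasing; nra).
  rewrite !ln_mult in H by lra; lra. }
assert (Hln1 : ln (1 + s) < ln (1 + t)) by (apply ln_increasing; lra).
destruct (Rlt_le_dec a 1) as [Ha1 | Ha1]; [nra |].
assert (b < 2) by (destruct (Req_dec b 2); [exfalso; apply Hab; split | ]; lra).
nra.
Qed.

Lemma ex_RInt_exp_linear z x y : 0 < x -> x <= y -> ex_RInt (fun t => exp (- z * t)) x y.
Proof.
apply ex_RInt_of_continuous_pos; intros t _.
apply continuous_of_ex_derive; auto_derive; exact I.
Qed.

Lemma is_RInt_Rpower_pred a p q :
  0 < a -> 0 < p -> p <= q ->
  is_RInt (fun t => Rpower t (a - 1)) p q ((Rpower q a - Rpower p a) / a).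
Proof.
intros Ha Hp Hpq.
replace ((Rpower q a - Rpower p a) / a) with (minus (Rpower q a / a) (Rpower p a / a))
  by (unfold minus, plus, opp; simpl; field; lra).
apply (is_RInt_derive (fun t => Rpower t a / a)); intros t Ht; rewrite Rmin_left in Ht by lra.
- unfold Rpower; auto_derive; [lra |].
  replace ((a - 1) * ln t) with (a * ln t + - ln t) by ring.
  rewrite exp_plus, exp_Ropp, exp_ln by lra; field; lra.
- apply continuous_of_ex_derive.
  unfold Rpower; auto_derive; lra.
Qed.

Definition tricomi_integrand (a b z t : R) : R := exp (- z * t) * tricomi_kernel a b t.

Definition tricomi_laplace (a b z : R) : R :=
  RInt_gen (tricomi_integrand a b z) (at_right 0) (Rbar_locally p_infty).

Lemma tricomi_integrand_pos a b z t : 0 < tricomi_integrand a b z t.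
Proof. apply Rmult_lt_0_compat; [apply exp_pos | apply tricomi_kernel_pos]. Qed.

Lemma continuous_tricomi_integrand a b z t : 0 < t -> continuous (tricomi_integrand a b z) t.
Proof.
intros Ht; apply continuous_of_ex_derive.
unfold tricomi_integrand, tricomi_kernel, Rpower; auto_derive; lra.
Qed.

Lemma ex_RInt_tricomi_integrand a b z x y :
  0 < x -> x <= y -> ex_RInt (tricomi_integrand a b z) x y.
Proof. apply ex_RInt_of_continuous_pos, continuous_tricomi_integrand. Qed.

Lemma RInt_tricomi_integrand_le_near_0 a b z x :
  0 < a -> b <= 2 -> 0 < z -> 0 < x <= 1 -> RInt (tricomi_integrand a b z) x 1 <= 2 / a.
Proof.
intros Ha Hb Hz Hx.
pose proof (is_RInt_scal _ _ _ 2 _ (is_RInt_Rpower_pred a x 1 Ha (proj1 Hx) (proj2 Hx))) as Hpow.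
apply Rle_trans with (RInt (fun t => 2 * Rpower t (a - 1)) x 1).
- apply RInt_le; [lra | apply ex_RInt_tricomi_integrand; lra | eexists; exact Hpow |].
  intros t Ht; unfold tricomi_integrand.
  pose proof (tricomi_kernel_le_near_0 a b t ltac:(lra) ltac:(lra)).
  pose proof (tricomi_kernel_pos a b t); pose proof (exp_pos (- z * t)).
  assert (exp (- z * t) <= 1)
    by (apply Rle_trans with (exp 0); [apply exp_le_exp; nra | rewrite exp_0; lra]).
  nra.
- rewrite (is_RInt_unique (fun t => 2 * Rpower t (a - 1)) _ _ _ Hpow).
  assert (Rpower 1 a = 1) by (unfold Rpower; rewrite ln_1, Rmult_0_r; apply exp_0).
  assert (0 < Rpower x a) by apply exp_pos.
  assert (0 < / a) by (apply Rinv_0_lt_compat; lra).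
  change (2 * ((Rpower 1 a - Rpower x a) / a) <= 2 / a); unfold Rdiv; nra.
Qed.

Lemma RInt_tricomi_integrand_le_at_oo a b z y :
  0 < a -> b <= 2 -> 0 < z -> 1 <= y -> RInt (tricomi_integrand a b z) 1 y <= 2 / z.
Proof.
intros Ha Hb Hz Hy.
apply Rle_trans with (RInt (fun t => 2 * exp (- z * t)) 1 y).
- apply RInt_le; [lra | apply ex_RInt_tricomi_integrand; lra | |].
  + apply (ex_RInt_scal (V := R_CompleteNormedModule)), ex_RInt_exp_linear; lra.
  + intros t Ht; unfold tricomi_integrand; rewrite Rmult_comm.
    apply Rmult_le_compat_r; [left; apply exp_pos |].
    apply tricomi_kernel_le_at_oo; lra.
- rewrite (RInt_scal (V := R_CompleteNormedModule)) by (apply ex_RInt_exp_linear; lra).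
  change (2 * RInt (fun t => exp (- z * t)) 1 y <= 2 * / z).
  apply Rmult_le_compat_l; [lra |].
  apply RInt_le_is_RInt_0oo; [apply ex_RInt_exp_linear | intros; left; apply exp_pos
                             | apply is_RInt_0oo_exp | |]; lra.
Qed.

Lemma RInt_tricomi_integrand_le a b z x y :
  0 < a -> b <= 2 -> 0 < z -> 0 < x -> x <= y ->
  RInt (tricomi_integrand a b z) x y <= 2 / a + 2 / z.
Proof.
intros Ha Hb Hz Hx Hxy.
set (x' := Rmin x 1); set (y' := Rmax y 1).
assert (x' <= x) by apply Rmin_l; assert (x' <= 1) by apply Rmin_r.
assert (0 < x') by (apply Rmin_pos; lra).
assert (y <= y') by apply Rmax_l; assert (1 <= y') by apply Rmax_r.
apply Rle_trans with (RInt (tricomi_integrand a b z) x' y').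
{ apply RInt_le_RInt_widen; auto.
  - apply ex_RInt_tricomi_integrand.
  - intros t _; left; apply tricomi_integrand_pos. }
rewrite <- (RInt_Chasles _ x' 1 y') by (apply ex_RInt_tricomi_integrand; lra).
pose proof (RInt_tricomi_integrand_le_near_0 a b z x' Ha Hb Hz ltac:(lra)).
pose proof (RInt_tricomi_integrand_le_at_oo a b z y' Ha Hb Hz ltac:(lra)).
unfold plus; simpl; lra.
Qed.

Lemma is_RInt_0oo_tricomi_laplace a b z :
  0 < a -> b <= 2 -> 0 < z -> is_RInt_0oo (tricomi_integrand a b z) (tricomi_laplace a b z).
Proof.
intros Ha Hb Hz.
destruct (ex_is_RInt_0oo_of_bounded (tricomi_integrand a b z)
  (ex_RInt_tricomi_integrand a b z) (fun t _ => Rlt_le _ _ (tricomi_integrand_pos a b z t))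
  (2 / a + 2 / z) (fun x y => RInt_tricomi_integrand_le a b z x y Ha Hb Hz)) as [L HL].
unfold tricomi_laplace; rewrite (is_RInt_gen_unique (V := R_CompleteNormedModule) _ _ HL).
exact HL.
Qed.

Lemma tricomi_laplace_pos a b z : 0 < a -> b <= 2 -> 0 < z -> 0 < tricomi_laplace a b z.
Proof.
intros Ha Hb Hz.
apply (is_RInt_0oo_gt_0 (tricomi_integrand a b z) (ex_RInt_tricomi_integrand a b z)
  (fun t _ => Rlt_le _ _ (tricomi_integrand_pos a b z t)) _ 1 2);
  [apply is_RInt_0oo_tricomi_laplace; auto | lra | |].
- intros t Ht; apply continuous_tricomi_integrand; lra.
- intros t _; apply tricomi_integrand_pos.
Qed.

Lemma tricomi_laplace_le a b z d :
  1 < a -> b <= 2 -> 0 < z -> 0 < d ->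
  z * tricomi_laplace a b z <= Rpower d (a - 1) + 2 * exp (- z * d / 2).
Proof.
intros Ha Hb Hz Hd.
set (c := exp (- z * d / 2)).
assert (Hmajor : is_RInt_0oo
  (fun t => Rpower d (a - 1) * exp (- z * t) + c * exp (- (z / 2) * t))
  (Rpower d (a - 1) * / z + c * / (z / 2))).
{ apply (is_RInt_gen_plus (V := R_NormedModule)); apply (is_RInt_gen_scal (V := R_NormedModule));
    apply is_RInt_0oo_exp; lra. }
assert (Hle : tricomi_laplace a b z <= Rpower d (a - 1) * / z + c * / (z / 2)).
{ refine (is_RInt_0oo_le _ _ _ _ _ (is_RInt_0oo_tricomi_laplace a b z ltac:(lra) Hb Hz) Hmajor).
  intros t Ht; cbv beta; rewrite Rabs_pos_eq by (left; apply tricomi_integrand_pos).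
  unfold tricomi_integrand.
  pose proof (exp_pos (- z * t)); pose proof (exp_pos (- (z / 2) * t)).
  assert (0 < c) by apply exp_pos; assert (0 < Rpower d (a - 1)) by apply exp_pos.
  (* Up to d the kernel is at most d^{a-1}; beyond d it is at most 1, and half of the decay
     of e^{-zt} is traded for the factor c = e^{-zd/2}. *)
  destruct (Rle_lt_dec t d) as [Htd | Hdt].
  - assert (tricomi_kernel a b t <= Rpower d (a - 1)).
    { apply Rle_trans with (Rpower t (a - 1)); [apply tricomi_kernel_le_Rpower; lra |].
      apply Rle_Rpower_l; lra. }
    nra.
  - assert (exp (- z * t) = exp (- (z / 2) * t) * exp (- (z / 2) * t))
      by (rewrite <- exp_plus; f_equal; field).
    assert (exp (- (z / 2) * t) <= c) by (apply exp_le_exp; nra).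
    pose proof (tricomi_kernel_le_1 a b t ltac:(lra) Hb Ht).
    pose proof (tricomi_kernel_pos a b t); nra. }
apply Rmult_le_compat_l with (r := z) in Hle; [| lra].
replace (z * (Rpower d (a - 1) * / z + c * / (z / 2))) with (Rpower d (a - 1) + 2 * c)
  in Hle by (field; lra).
exact Hle.
Qed.

Lemma exp_neg_mul_lt_1 u : 0 < u -> exp (- u) * u < 1.
Proof.
intros Hu; rewrite exp_Ropp.
pose proof (exp_ineq1 u ltac:(lra)); pose proof (exp_pos u).
apply Rmult_lt_reg_l with (exp u); [lra |].
rewrite <- Rmult_assoc, Rinv_r by lra; lra.
Qed.

Lemma tricomi_laplace_small a b eps :
  1 < a -> b <= 2 -> 0 < eps -> exists z, 0 < z /\ z * tricomi_laplace a b z < eps.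
Proof.
intros Ha Hb Heps.
set (d := Rpower (eps / 2) (/ (a - 1))).
assert (Hd : 0 < d) by apply exp_pos.
assert (Hdpow : Rpower d (a - 1) = eps / 2).
{ unfold d; rewrite Rpower_mult, Rinv_l, Rpower_1 by lra; reflexivity. }
set (z := 8 / (eps * d)).
assert (Hz : 0 < z) by (unfold z; apply Rdiv_lt_0_compat; nra).
exists z; split; [exact Hz |].
pose proof (tricomi_laplace_le a b z d Ha Hb Hz Hd) as Hle.
replace (- z * d / 2) with (- (4 / eps)) in Hle by (unfold z; field; lra).
pose proof (exp_neg_mul_lt_1 (4 / eps) ltac:(apply Rdiv_lt_0_compat; lra)) as Hsmall.
assert (exp (- (4 / eps)) < eps / 4).
{ apply Rmult_lt_reg_r with (4 / eps); [apply Rdiv_lt_0_compat; lra |].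
  replace (eps / 4 * (4 / eps)) with 1 by (field; lra); exact Hsmall. }
lra.
Qed.

Lemma ln_2_pos : 0 < ln 2.
Proof. rewrite <- ln_1; apply ln_increasing; lra. Qed.

Lemma ln_2_lt_1 : ln 2 < 1.
Proof. rewrite <- (ln_exp 1); apply ln_increasing; [lra |]; pose proof (exp_ineq1 1); lra. Qed.

Definition sign_test (a b t : R) : R :=
  (2 * exp (- (2 * t)) - exp (- t)) * (tricomi_kernel a b t - tricomi_kernel a b (ln 2)).

Lemma sign_test_pos a b t :
  a <= 1 -> b <= 2 -> ~ (a = 1 /\ b = 2) -> 0 < t -> t <> ln 2 -> 0 < sign_test a b t.
Proof.
intros Ha Hb Hab Ht Htln; unfold sign_test.
set (e := exp (- t)).
assert (He : 0 < e) by apply exp_pos.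
replace (exp (- (2 * t))) with (e * e) by (unfold e; rewrite <- exp_plus; f_equal; ring).
assert (Hhalf : exp (- ln 2) = / 2) by (rewrite exp_Ropp, exp_ln; lra).
pose proof ln_2_pos.
destruct (Rtotal_order t (ln 2)) as [Hlt | [Heq | Hgt]]; [| contradiction |].
- assert (/ 2 < e) by (rewrite <- Hhalf; apply exp_increasing; lra).
  pose proof (tricomi_kernel_decreasing a b t (ln 2) Ha Hb Hab (conj Ht Hlt)).
  apply Rmult_lt_0_compat; nra.
- assert (e < / 2) by (rewrite <- Hhalf; apply exp_increasing; lra).
  pose proof (tricomi_kernel_decreasing a b (ln 2) t Ha Hb Hab (conj ln_2_pos Hgt)).
  assert (2 * (e * e) - e < 0) by nra.
  nra.
Qed.

Lemma sign_test_nonneg a b t :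
  a <= 1 -> b <= 2 -> ~ (a = 1 /\ b = 2) -> 0 < t -> 0 <= sign_test a b t.
Proof.
intros Ha Hb Hab Ht; destruct (Req_dec t (ln 2)) as [-> | Htln].
- unfold sign_test; rewrite Rminus_diag, Rmult_0_r; lra.
- left; apply sign_test_pos; auto.
Qed.

Lemma continuous_sign_test a b t : 0 < t -> continuous (sign_test a b) t.
Proof.
intros Ht; apply continuous_of_ex_derive.
unfold sign_test, tricomi_kernel, Rpower; auto_derive; lra.
Qed.

Lemma is_RInt_0oo_sign_test a b :
  0 < a -> b <= 2 ->
  is_RInt_0oo (sign_test a b) (2 * tricomi_laplace a b 2 - tricomi_laplace a b 1).
Proof.
intros Ha Hb.
set (c := tricomi_kernel a b (ln 2)).
pose proof (is_RInt_0oo_tricomi_laplace a b 1 Ha Hb ltac:(lra)) as H1.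
pose proof (is_RInt_0oo_tricomi_laplace a b 2 Ha Hb ltac:(lra)) as H2.
pose proof (is_RInt_0oo_exp 1 ltac:(lra)) as E1.
pose proof (is_RInt_0oo_exp 2 ltac:(lra)) as E2.
pose proof (is_RInt_gen_minus (V := R_NormedModule) _ _ _ _
  (is_RInt_gen_minus (V := R_NormedModule) _ _ _ _
     (is_RInt_gen_scal (V := R_NormedModule) _ 2 _ H2) H1)
  (is_RInt_gen_scal (V := R_NormedModule) _ c _
     (is_RInt_gen_minus (V := R_NormedModule) _ _ _ _
        (is_RInt_gen_scal (V := R_NormedModule) _ 2 _ E2) E1))) as H.
(* The constant h(ln 2) contributes h(ln 2) (2 / 2 - 1 / 1) = 0. *)
replace (2 * tricomi_laplace a b 2 - tricomi_laplace a b 1) with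
  (minus (minus (scal 2 (tricomi_laplace a b 2)) (tricomi_laplace a b 1))
         (scal c (minus (scal 2 (/ 2)) (/ 1))))
  by (unfold minus, plus, opp, scal; simpl; unfold mult; simpl; field).
apply (is_RInt_gen_ext (V := R_NormedModule)) with (2 := H).
apply filter_forall; intros ab t _.
unfold minus, plus, opp, scal; simpl; unfold mult; simpl.
unfold sign_test, tricomi_integrand; fold c.
rewrite <- !Ropp_mult_distr_l, Rmult_1_l; ring.
Qed.

Lemma tricomi_laplace_lt_double a b :
  0 < a -> a <= 1 -> b <= 2 -> ~ (a = 1 /\ b = 2) ->
  tricomi_laplace a b 1 < 2 * tricomi_laplace a b 2.
Proof.
intros Ha Ha1 Hb Hab.
enough (0 < 2 * tricomi_laplace a b 2 - tricomi_laplace a b 1) by lra.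
apply (is_RInt_0oo_gt_0 (sign_test a b)) with 1 2.
- apply ex_RInt_of_continuous_pos, continuous_sign_test.
- intros t Ht; apply sign_test_nonneg; auto.
- apply is_RInt_0oo_sign_test; auto.
- lra.
- intros t Ht; apply continuous_sign_test; lra.
- pose proof ln_2_lt_1; intros t Ht; apply sign_test_pos; auto; lra.
Qed.

Lemma is_RInt_RtoC (f : R -> R) x y l :
  is_RInt f x y l -> is_RInt (V := C_R_NormedModule) (fun t => RtoC (f t)) x y (RtoC l).
Proof.
intros H; apply (is_RInt_fct_extend_pair (U := R_NormedModule) (V := R_NormedModule)); [exact H |].
pose proof (is_RInt_const (V := R_NormedModule) x y 0) as H0.
change (scal (y - x) 0) with ((y - x) * 0) in H0; rewrite Rmult_0_r in H0; exact H0.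
Qed.

Lemma is_RInt_gen_RtoC {Fa Fb} {FFa : Filter Fa} {FFb : Filter Fb} (f : R -> R) l :
  is_RInt_gen f Fa Fb l ->
  is_RInt_gen (V := C_R_NormedModule) (fun t => RtoC (f t)) Fa Fb (RtoC l).
Proof.
intros H P [eps Heps].
specialize (H (ball l eps) (locally_ball _ _)); unfold filtermapi in *.
eapply filter_imp; [| exact H].
intros [x y] [v [Hv Hball]]; exists (RtoC v); split.
- apply is_RInt_RtoC, Hv.
- apply Heps; split; [exact Hball | apply ball_center].
Qed.

Lemma Cdiv_RtoC x y : Cdiv (RtoC x) (RtoC y) = RtoC (x / y).
Proof.
destruct (Req_dec y 0) as [-> | Hy]; [| symmetry; apply RtoC_div, Hy].
unfold Cdiv, Cinv, Cmult, RtoC; simpl; rewrite Rdiv_0_r; f_equal; unfold Rdiv; ring.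
Qed.

Lemma TricomiU_RtoC a b z :
  0 < a -> b <= 2 -> 0 < z -> TricomiU a b (RtoC z) = RtoC (tricomi_laplace a b z / Gamma_fun a).
Proof.
intros Ha Hb Hz.
assert (H : is_RInt_gen (V := C_R_NormedModule)
  (fun t => Cmult (cexp_neg (RtoC z) t) (RtoC (Rpower t (a - 1) * Rpower (1 + t) (b - a - 1))))
  (at_right 0) (Rbar_locally p_infty) (RtoC (tricomi_laplace a b z))).
{ eapply is_RInt_gen_ext; [| apply is_RInt_gen_RtoC, is_RInt_0oo_tricomi_laplace; auto].
  apply filter_forall; intros ab t _.
  unfold cexp_neg, tricomi_integrand, tricomi_kernel, Cmult, RtoC; simpl.
  rewrite Rmult_0_l, cos_0, sin_0; f_equal; ring. }
unfold TricomiU; rewrite (is_RInt_gen_unique (V := C_R_CompleteNormedModule) _ _ H).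
unfold Cmult, RtoC; simpl; f_equal; unfold Rdiv; ring.
Qed.

Lemma Z_U_RtoC a b R0 Rinf tau s :
  0 < a -> b <= 2 -> 0 < tau -> 0 < s ->
  Z_U a b R0 Rinf tau (RtoC s) =
  RtoC (Rinf + (R0 - Rinf) * (tricomi_laplace a b (s * tau) / Gamma_fun a
                               / (1 + tricomi_laplace a b (s * tau) / Gamma_fun a))).
Proof.
intros Ha Hb Htau Hs; unfold Z_U.
rewrite <- RtoC_mult, TricomiU_RtoC by (auto; nra).
rewrite <- RtoC_plus, Cdiv_RtoC, <- RtoC_mult, <- RtoC_plus; reflexivity.
Qed.

Lemma Debye_RtoC R0 Rinf tau' s :
  Debye R0 Rinf tau' (RtoC s) = RtoC (Rinf + (R0 - Rinf) / (1 + s * tau')).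
Proof.
unfold Debye; rewrite <- RtoC_mult, <- RtoC_plus, Cdiv_RtoC, <- RtoC_plus; reflexivity.
Qed.

Lemma Rdiv_1_plus_eq u w : 0 < w -> u / (1 + u) = 1 / (1 + w) -> u * w = 1.
Proof.
intros Hw H.
destruct (Req_dec (1 + u) 0) as [Hu | Hu].
- rewrite Hu, Rdiv_0_r in H.
  assert (0 < 1 / (1 + w)) by (apply Rdiv_lt_0_compat; lra); lra.
- assert (Hu' : u = 1 / (1 + w) * (1 + u)) by (rewrite <- H; field; exact Hu).
  replace (u * w) with (u * (1 + w) - u) by ring.
  rewrite Hu' at 1; field; lra.
Qed.

Lemma tricomi_laplace_debye a b R0 Rinf tau tau' :
  0 < a -> b <= 2 -> Rinf < R0 -> 0 < tau -> 0 < tau' ->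
  (forall s : C, 0 < Re s -> Z_U a b R0 Rinf tau s = Debye R0 Rinf tau' s) ->
  forall z, 0 < z -> z * tricomi_laplace a b z = Gamma_fun a * tau / tau'.
Proof.
intros Ha Hb HR Htau Htau' Heq z Hz.
set (s := z / tau).
assert (Hs : 0 < s) by (apply Rdiv_lt_0_compat; lra).
specialize (Heq (RtoC s) Hs).
rewrite Z_U_RtoC, Debye_RtoC in Heq by auto; apply RtoC_inj in Heq.
replace (s * tau) with z in Heq by (unfold s; field; lra).
set (u := tricomi_laplace a b z / Gamma_fun a) in Heq.
assert (Hfrac : u / (1 + u) = 1 / (1 + s * tau')).
{ apply Rmult_eq_reg_l with (R0 - Rinf); [| lra].
  unfold Rdiv in *; rewrite Rmult_1_l; lra. }
pose proof (Rdiv_1_plus_eq u (s * tau') ltac:(nra) Hfrac) as Hu.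
assert (HGamma : Gamma_fun a <> 0).
{ intros H0; unfold u in Hu; rewrite H0, Rdiv_0_r, Rmult_0_l in Hu; lra. }
replace (z * tricomi_laplace a b z) with (u * (s * tau') * (Gamma_fun a * tau / tau'))
  by (unfold u, s; field; lra).
rewrite Hu; ring.
Qed.

Theorem proposition1 (a b R0 Rinf tau : R) :
  0 < a -> 1 < b -> b <= 2 -> 0 < Rinf -> Rinf < R0 -> 0 < tau ->
  ~ (a = 1 /\ b = 2) ->
  ~ (exists tau' : R, 0 < tau' /\
       forall s : C, 0 < Re s -> Z_U a b R0 Rinf tau s = Debye R0 Rinf tau' s).
Proof.
intros Ha _ Hb _ HR0 Htau Hab [tau' [Htau' Heq]].
assert (Hscaling : forall z, 0 < z -> z * tricomi_laplace a b z = tricomi_laplace a b 1).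
{ intros z Hz.
  rewrite (tricomi_laplace_debye a b R0 Rinf tau tau' Ha Hb HR0 Htau Htau' Heq z Hz).
  rewrite <- (Rmult_1_l (tricomi_laplace a b 1)); symmetry.
  apply (tricomi_laplace_debye a b R0 Rinf tau tau'); auto; lra. }
destruct (Rle_lt_dec a 1) as [Ha1 | Ha1].
- pose proof (tricomi_laplace_lt_double a b Ha Ha1 Hb Hab).
  pose proof (Hscaling 2 ltac:(lra)); lra.
- destruct (tricomi_laplace_small a b (tricomi_laplace a b 1) Ha1 Hb
    (tricomi_laplace_pos a b 1 Ha Hb ltac:(lra))) as [z [Hz Hsmall]].
  rewrite Hscaling in Hsmall by exact Hz; lra.
Qed.
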